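(* Let $G$ be a commutative group, $f$ a bijection of $G$, and $Q=G(f)=(G\cup\overline{G},* )$. Then: (i) $Q$ is commutative. (ii) For all $x,y\in G$: $x\backslash y=x^{-1}y$, $x\backslash\overline{y}=\overline{x^{-1}y}$, $\overline{x}\backslash y=\overline{x^{-1}f^{-1}(y)}$, $\overline{x}\backslash\overline{y}=x^{-1}y$. (iii) $G\le N_\mu(Q)$. (iv) $Q$ is a group if and only if $f$ is a translation of $G$, i.e., there is $c\in G$ with $f(x)=xc$ for all $x\in G$. (v) $N_\lambda(Q)\cap G=N_\rho(Q)\cap G=Z(Q)\cap G=\{x\in G:\ f(xy)=xf(y)\text{ for every }y\in G\}$. If $Q$ is not a group (so that $G=N_\mu(Q)$), then $N_\lambda(Q)=N_\rho(Q)=Z(Q)\le G$.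
   Context: A loop is a set with a binary operation and a neutral element $1$ in which all left translations $L_x:y\mapsto xy$ and right translations $R_x:y\mapsto yx$ are bijections; $x\backslash y$ denotes the unique $z$ with $xz=y$. For a loop $Q$: the left nucleus is $N_\lambda(Q)=\{x:(xy)z=x(yz)\ \forall y,z\}$, the middle nucleus is $N_\mu(Q)=\{y:(xy)z=x(yz)\ \forall x,z\}$, the right nucleus is $N_\rho(Q)=\{z:(xy)z=x(yz)\ \forall x,y\}$, and the center $Z(Q)$ is the set of elements lying in all three nuclei and commuting with all elements. Construction $G(f)$: for a commutative group $G$ (written multiplicatively) and a bijection $f:G\to G$, let $\overline{G}=\{\overline{x}:x\in G\}$ be a disjoint copy of $G$, and let $G(f)$ be the set $G\cup\overline{G}$ with multiplication $*$ defined for $x,y\in G$ by $x*y=xy$, $x*\overline{y}=\overline{xy}$, $\overline{x}*y=\overline{xy}$, $\overline{x}*\overline{y}=f(xy)$. It is a loop with neutral element $1$. *)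

(* The commutative group G is a zmodType (written additively). *)
From HB Require Import structures.
From mathcomp Require Import all_boot all_order all_algebra.
Set Implicit Arguments. Unset Strict Implicit. Unset Printing Implicit Defensive.
Import GRing.Theory.
Local Open Scope ring_scope.

(* Carrier of G(f): G + G, with  inl x  standing for x and  inr x  for \overline{x}. *)
Definition Gf_mul (G : zmodType) (f : G -> G) (a b : G + G) : G + G :=
  match a, b with
  | inl x, inl y => inl (x + y)
  | inl x, inr y => inr (x + y)
  | inr x, inl y => inr (x + y)
  | inr x, inr y => inl (f (x + y))
  end.

Definition lnuc (T : Type) (m : T -> T -> T) (a : T) : Prop :=
  forall y z, m (m a y) z = m a (m y z).
Definition mnuc (T : Type) (m : T -> T -> T) (b : T) : Prop :=
  forall x z, m (m x b) z = m x (m b z).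
Definition rnuc (T : Type) (m : T -> T -> T) (c : T) : Prop :=
  forall x y, m (m x y) c = m x (m y c).
Definition center (T : Type) (m : T -> T -> T) (a : T) : Prop :=
  lnuc m a /\ mnuc m a /\ rnuc m a /\ forall y, m a y = m y a.

Definition is_group (T : Type) (m : T -> T -> T) : Prop :=
  (forall a b c, m (m a b) c = m a (m b c)) /\
  exists e, (forall a, m e a = a /\ m a e = a) /\
            (forall a, exists b, m a b = e /\ m b a = e).

From HB Require Import structures.
From mathcomp Require Import all_boot all_order all_algebra.
Import GRing.Theory.
Local Open Scope ring_scope.
Set Implicit Arguments.

(* The argument is organised around two observations.
   1. In any commutative magma the three nuclei are tied together: an element
      of the left nucleus lies in the right and middle nuclei, and the left
      nucleus equals the right nucleus and the center.  Since G(f) is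
      commutative, all statements about N_rho and Z reduce to statements
      about N_lambda.
   2. In G(f), an element x of G lies in N_lambda exactly when f commutes with
      the translation by x, i.e. f (x + y) = x + f y for all y; while an
      element \overline{b} lying in N_mu already forces f to commute with
      every translation.  A map commuting with every translation of G is
      itself a translation y |-> y + f 0, and for such f the loop G(f) is an
      (associative) group.
   Hence G(f) is a group iff f is a translation iff some \overline{b} is in
   N_mu; when G(f) is not a group every nucleus is contained in G. *)

Section CommutativeMagma.
Variables (T : Type) (m : T -> T -> T).
Hypothesis mC : forall a b, m a b = m b a.

Lemma comm_lnuc_rnuc a : lnuc m a <-> rnuc m a.
Proof.
split=> Ha x y.
- by rewrite mC (mC x y) -Ha mC (mC a y).
- by rewrite mC (mC a x) -Ha mC (mC y x).
Qed.

Lemma comm_lnuc_mnuc a : lnuc m a -> mnuc m a.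
Proof. by move=> Ha x z; rewrite (mC x a) Ha (mC x z) -Ha mC. Qed.

Lemma comm_lnuc_center a : lnuc m a <-> center m a.
Proof.
split; last by case.
move=> Ha; split; first exact: Ha.
split; first exact: comm_lnuc_mnuc.
by split; [apply/comm_lnuc_rnuc | move=> y; apply: mC].
Qed.

End CommutativeMagma.

Section LoopGf.
Variables (G : zmodType) (f : G -> G).

Local Notation m := (Gf_mul f).

Definition commutes_with_shift (x : G) : Prop := forall y, f (x + y) = x + f y.

Definition is_translation : Prop := exists c : G, forall x, f x = x + c.

Lemma Gf_mulC a b : m a b = m b a.
Proof. by case: a b => a [] b /=; rewrite addrC. Qed.

Lemma mnuc_inl x : mnuc m (inl x).
Proof. by move=> [] y [] z /=; rewrite ?addrA. Qed.

Lemma all_shifts_translation :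
  (forall x, commutes_with_shift x) <-> is_translation.
Proof.
split=> [Hf | [c Hc] x y].
- by exists (f 0) => x; rewrite -Hf addr0.
- by rewrite !Hc addrA.
Qed.

(* For a translation f, G(f) is a group with neutral element 0; the inverse
   of \overline{a} is \overline{-a - c}. *)
Lemma translation_group : is_translation -> is_group m.
Proof.
move=> [c Hc]; split.
  by case=> a [] b [] c' /=; rewrite ?Hc !addrA // (addrAC _ c).
exists (inl 0); split; first by case=> a /=; rewrite ?add0r ?addr0.
case=> a; first by exists (inl (- a)); rewrite /= addrN addNr.
exists (inr (- a - c)); rewrite /= (addrC (- a - c)) Hc addrA addrN add0r.
by rewrite addNr.
Qed.

(* An element \overline{b} of the middle nucleus forces f to commute with
   every translation: compare (x * \overline{b}) * \overline{w - b} with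
   x * (\overline{b} * \overline{w - b}). *)
Lemma mnuc_inr_shifts b : mnuc m (inr b) -> forall x, commutes_with_shift x.
Proof.
move=> Hb x w; have := Hb (inl x) (inr (w - b)).
by rewrite /= -addrA !(addrC b) subrK => -[].
Qed.

Lemma Gf_group_translation : is_group m <-> is_translation.
Proof.
split; last exact: translation_group.
case=> assoc _; apply/all_shifts_translation/(@mnuc_inr_shifts 0).
by move=> x z; apply: assoc.
Qed.

Lemma lnuc_inl x : lnuc m (inl x) <-> commutes_with_shift x.
Proof.
split=> [Hx y | Hx [] y [] z /=]; rewrite ?addrA //.
- by have := Hx (inr 0) (inr y); rewrite /= !add0r addr0 => -[].
- by rewrite -Hx addrA.
Qed.

Lemma mnuc_not_group a : ~ is_group m -> mnuc m a <-> exists x, a = inl x.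
Proof.
move=> NG; case: a => [x | b]; split.
- by exists x.
- by move=> _; apply: mnuc_inl.
- by move=> /mnuc_inr_shifts /all_shifts_translation /translation_group.
- by case.
Qed.

End LoopGf.

(* (ii) Left divisions in G(f), computed case by case; only the case
   \overline{x} \ y needs the inverse g of f. *)
Section LeftDivision.
Variables (G : zmodType) (f g : G -> G).
Hypotheses (fK : cancel f g) (gK : cancel g f).

Local Notation m := (Gf_mul f).

Lemma ldiv_inl_inl x y z : m (inl x) z = inl y <-> z = inl (y - x).
Proof.
split=> [|->]; last by rewrite /= subrKC.
by case: z => z //= [<-]; rewrite addrC addKr.
Qed.

Lemma ldiv_inl_inr x y z : m (inl x) z = inr y <-> z = inr (y - x).
Proof.
split=> [|->]; last by rewrite /= subrKC.
by case: z => z //= [<-]; rewrite addrC addKr.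
Qed.

Lemma ldiv_inr_inl x y z : m (inr x) z = inl y <-> z = inr (g y - x).
Proof.
split=> [|->]; last by rewrite /= subrKC gK.
by case: z => z //= [<-]; rewrite fK addrC addKr.
Qed.

Lemma ldiv_inr_inr x y z : m (inr x) z = inr y <-> z = inl (y - x).
Proof.
split=> [|->]; last by rewrite /= subrKC.
by case: z => z //= [<-]; rewrite addrC addKr.
Qed.

End LeftDivision.

Theorem lemma2p1 (G : zmodType) (f g : G -> G)
  (fK : cancel f g) (gK : cancel g f) :
  let m := Gf_mul f in
  (* (i) *)
  (forall a b, m a b = m b a) /\
  (* (ii) left divisions: z is the unique solution of a * z = b *)
  (forall x y z, m (inl x) z = inl y <-> z = inl (y - x)) /\
  (forall x y z, m (inl x) z = inr y <-> z = inr (y - x)) /\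
  (forall x y z, m (inr x) z = inl y <-> z = inr (g y - x)) /\
  (forall x y z, m (inr x) z = inr y <-> z = inl (y - x)) /\
  (* (iii) *)
  (forall x, mnuc m (inl x)) /\
  (* (iv) *)
  (is_group m <-> exists c : G, forall x, f x = x + c) /\
  (* (v) *)
  (forall x,
     (lnuc m (inl x) <-> (forall y, f (x + y) = x + f y)) /\
     (rnuc m (inl x) <-> (forall y, f (x + y) = x + f y)) /\
     (center m (inl x) <-> (forall y, f (x + y) = x + f y))) /\
  (~ is_group m ->
     (forall a, mnuc m a <-> exists x, a = inl x) /\
     (forall a, lnuc m a <-> rnuc m a) /\
     (forall a, lnuc m a <-> center m a) /\
     (forall a, center m a -> exists x, a = inl x)).
Proof.
move=> m; have mC := @Gf_mulC G f.
split; first exact: mC.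
split; first exact: ldiv_inl_inl.
split; first exact: ldiv_inl_inr.
split; first exact: ldiv_inr_inl.
split; first exact: ldiv_inr_inr.
split; first exact: mnuc_inl.
split; first exact: Gf_group_translation.
split.
  move=> x; have Hx := @lnuc_inl G f x.
  split; first exact: Hx.
  by split; apply: iff_trans Hx; apply: iff_sym;
    [apply: comm_lnuc_rnuc | apply: comm_lnuc_center].
move=> NG; split; first by move=> a; apply: mnuc_not_group.
split; first exact: comm_lnuc_rnuc.
split; first exact: comm_lnuc_center.
by move=> a [_ [/(mnuc_not_group a NG)]].
Qed.
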